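(* Let $P,Q\in\mathrm{Mat}_d(\mathbb{Z})$ be irreducible and let $p(x)\in\mathbb{Q}[x]$ be the characteristic polynomial of $P^{-1}Q$. Then $P,Q$ are coprime if and only if $c=|\det P|$ is the smallest positive integer such that $c\,p(x)\in \mathbb{Z}[x]$.
   Context: Irreducible: there are no non-trivial subspaces $U,V$ of $\mathbb{Q}^d$ of the same dimension (non-trivial meaning neither $\{0\}$ nor $\mathbb{Q}^d$) with $PU\subseteq V$ and $QU\subseteq V$; irreducible matrices are invertible over $\mathbb{Q}$. Coprime: there are no $R,S\in \mathrm{GL}_d(\mathbb{Q})$ with $0<|\det(R)\det(S)|<1$ such that $RPS,RQS\in\mathrm{Mat}_d(\mathbb{Z})$. *)

From HB Require Import structures.
From mathcomp Require Import all_boot all_order all_algebra.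
Set Implicit Arguments. Unset Strict Implicit. Unset Printing Implicit Defensive.
Import Order.TTheory GRing.Theory Num.Theory.
Local Open Scope ring_scope.

Definition ratmx (d : nat) (P : 'M[int]_d) : 'M[rat]_d := map_mx intr P.

(* Subspaces of Q^d are represented as row spaces of d x d rational matrices
   (mxalgebra).  Q^d is viewed as column vectors; the image P U of the
   subspace spanned by the rows of U (read as column vectors) is the row
   space of U *m P^T. *)
Definition mx_irreducible (d : nat) (P Q : 'M[rat]_d) : Prop :=
  ~ exists U V : 'M[rat]_d,
      [/\ \rank U = \rank V, (0 < \rank U)%N, (\rank U < d)%N,
          (U *m P^T <= V)%MS & (U *m Q^T <= V)%MS].

Definition mx_integral (d : nat) (A : 'M[rat]_d) : Prop :=
  forall i j, A i j \is a Num.int.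

Definition mx_coprime (d : nat) (P Q : 'M[rat]_d) : Prop :=
  ~ exists R S : 'M[rat]_d,
      [/\ R \in unitmx, S \in unitmx,
          0 < `|\det R * \det S| < 1,
          mx_integral (R *m P *m S) & mx_integral (R *m Q *m S)].

Definition least_int_clearing (c : nat) (p : {poly rat}) : Prop :=
  [/\ (0 < c)%N, c%:R *: p \is a polyOver Num.int &
      forall c' : nat, (0 < c')%N -> c'%:R *: p \is a polyOver Num.int ->
        (c <= c')%N].

From HB Require Import structures.
From mathcomp Require Import all_boot all_order all_algebra.
From mathcomp Require Import zify.
Import Order.TTheory GRing.Theory Num.Theory.
Set Implicit Arguments. Unset Strict Implicit. Unset Printing Implicit Defensive.
Local Open Scope ring_scope.

(* The pencil determinant f(x) = det(xP - Q) has integer coefficients, equals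
   det(P) p(x) and has leading coefficient det P.  So |det P| fails to be the
   least integer clearing p exactly when some prime l divides every coefficient
   of f, i.e. when the pencil is singular modulo l.  Unimodular row and column
   operations (Smith normal form) bring a pencil that is singular over F_l to a
   form where X P Y and X Q Y vanish mod l on a common I x J block with
   |I| + |J| = d + 1; dividing the rows in I by l and multiplying the columns
   outside J by l keeps both integral and scales the determinant by 1/l, so
   P, Q are not coprime.  Conversely, if R P S and R Q S are integral with
   0 < |det R det S| < 1, then det(R) det(S) f is an integer polynomial whose
   leading coefficient det(R) det(S) det(P) is an integer of absolute value
   less than |det P| that clears p. *)

Section Pencil.
Variable R : comNzRingType.

Definition pencil n (M N : 'M[R]_n) : 'M[{poly R}]_n :=
  'X *: map_mx polyC M - map_mx polyC N.

Definition det_pencil n (M N : 'M[R]_n) : {poly R} := \det (pencil M N).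

Lemma det_pencilM n (A M N B : 'M[R]_n) :
  det_pencil (A *m M *m B) (A *m N *m B) = (\det A * \det B)%:P * det_pencil M N.
Proof.
rewrite /det_pencil.
have -> : pencil (A *m M *m B) (A *m N *m B) =
         map_mx polyC A *m pencil M N *m map_mx polyC B.
  by rewrite /pencil mulmxBr mulmxBl -scalemxAr -scalemxAl !map_mxM.
by rewrite !det_mulmx !det_map_mx rmorphM mulrAC.
Qed.

Lemma det_pencil_lblock n1 n2 (M N : 'M[R]_(n1 + n2)) :
  ursubmx M = 0 -> ursubmx N = 0 ->
  det_pencil M N =
  det_pencil (ulsubmx M) (ulsubmx N) * det_pencil (drsubmx M) (drsubmx N).
Proof.
move=> M0 N0; rewrite /det_pencil /pencil -[M]submxK -[N]submxK M0 N0.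
rewrite !map_block_mx scale_block_mx opp_block_mx add_block_mx !map_mx0.
by rewrite scaler0 subr0 det_lblock !block_mxKul !block_mxKdr.
Qed.

Lemma det_pencil0_mx11 (B : 'M[R]_1) : det_pencil 0 B = - (B 0 0)%:P.
Proof. by rewrite /det_pencil det_mx11 /pencil map_mx0 scaler0 sub0r !mxE. Qed.

End Pencil.

Lemma map_det_pencil (R S : comNzRingType) (f : {rmorphism R -> S}) n
    (M N : 'M[R]_n) :
  map_poly f (det_pencil M N) = det_pencil (map_mx f M) (map_mx f N).
Proof.
rewrite /det_pencil -det_map_mx; congr (\det _); apply/matrixP => i j.
by rewrite !mxE rmorphB /= rmorphM /= !map_polyC map_polyX.
Qed.

Section FieldPencil.
Variable F : fieldType.

Lemma det_pencil_char_poly n (M N : 'M[F]_n) : M \in unitmx ->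
  det_pencil M N = (\det M)%:P * char_poly (invmx M *m N).
Proof.
move=> uM; rewrite /det_pencil /char_poly -det_map_mx -det_mulmx /char_poly_mx.
by rewrite mulmxBr mul_mx_scalar -map_mxM mulmxA mulmxV // mul1mx.
Qed.

Lemma det_pencil_eq0 n (M N : 'M[F]_n) : det_pencil M N = 0 -> \det M = 0.
Proof.
apply: contra_eq => dM; have uM : M \in unitmx by rewrite unitmxE unitfE.
rewrite det_pencil_char_poly // mulf_eq0 polyC_eq0 (negbTE dM).
by rewrite (negbTE (monic_neq0 (char_poly_monic _))).
Qed.

End FieldPencil.

Section ZeroBlock.
Variable R : pzRingType.

Definition common_zero_block n (A B : 'M[R]_n) : Prop :=
  exists I J : {set 'I_n}, (#|I| + #|J| = n.+1)%N /\
    forall i j, i \in I -> j \in J -> A i j = 0 /\ B i j = 0.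

Lemma common_zero_block_usub n (A B : 'M[R]_(1 + n)) :
  usubmx A = 0 -> usubmx B = 0 -> common_zero_block A B.
Proof.
move=> A0 B0; exists [set lshift n 0], setT.
split; first by rewrite cards1 cardsT card_ord.
move=> i j; rewrite inE => /eqP -> _.
by split; [move: A0 | move: B0] => /matrixP/(_ 0 j); rewrite !mxE.
Qed.

Lemma common_zero_block_lblock m n (Aul Bul : 'M[R]_m) (Adl Bdl : 'M_(n, m))
    (Adr Bdr : 'M_n) :
  common_zero_block Adr Bdr ->
  common_zero_block (block_mx Aul 0 Adl Adr) (block_mx Bul 0 Bdl Bdr).
Proof.
move=> [I [J [cardIJ zeroIJ]]].
exists ([set lshift n i | i in setT] :|: [set rshift m i | i in I]).
exists [set rshift m j | j in J]; split.
  rewrite cardsU (card_imset _ (@lshift_inj _ _)) !(card_imset _ (@rshift_inj _ _)).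
  have -> : [set lshift n i | i in setT] :&: [set rshift m i | i in I] = set0.
    apply/setP => k; rewrite !inE.
    apply/andP => -[/imsetP [i _ ->] /imsetP [i' _ /eqP]].
    by rewrite eq_lrshift.
  by rewrite cards0 subn0 cardsT card_ord -addnA cardIJ addnS.
move=> i j /setUP [] /imsetP [i' hi' ->] /imsetP [j' hj' ->].
  by rewrite !block_mxEur !mxE.
by rewrite !block_mxEdr; apply: zeroIJ.
Qed.

End ZeroBlock.

Lemma mul_lift0_mx (R : pzRingType) n (X Y : 'M[R]_n) (A : 'M[R]_(1 + n)) :
  lift0_mx X *m A *m lift0_mx Y =
  block_mx (ulsubmx A) (ursubmx A *m Y) (X *m dlsubmx A) (X *m drsubmx A *m Y).
Proof.
rewrite -{1}[A]submxK /lift0_mx !mulmx_block.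
by rewrite !mul1mx !mul0mx !mulmx0 !mulmx1 !addr0 !add0r.
Qed.

Lemma map_lift0_mx (R S : pzRingType) (f : {rmorphism R -> S}) n (X : 'M[R]_n) :
  map_mx f (lift0_mx X) = lift0_mx (map_mx f X).
Proof. by rewrite /lift0_mx map_block_mx map_mx1 !map_mx0. Qed.

Lemma lift0_mx_unit (R : comUnitRingType) n (X : 'M[R]_n) :
  (lift0_mx X \in unitmx) = (X \in unitmx).
Proof. by rewrite !unitmxE det_ublock det1 mul1r. Qed.

Lemma unimodular_row_reduce n (r : 'rV[int]_(1 + n)) :
  exists2 Y : 'M[int]_(1 + n), Y \in unitmx & rsubmx (r *m Y) = 0.
Proof.
have [l _ [S uS [e _ defr]]] := int_Smith_normal_form r.
exists (invmx S); first by rewrite unitmx_inv.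
apply/matrixP => i j; rewrite defr mulmxK // !mxE big1 // => k _.
by rewrite (ord1 k) !mxE mulr0.
Qed.

Lemma det_ratmx_unimodular n (X : 'M[int]_n) : X \in unitmx -> `|\det (ratmx X)| = 1.
Proof.
rewrite unitmxE /ratmx det_map_mx -intr_norm => /orP [] /eqP ->.
  by rewrite normr1.
by rewrite normrN1.
Qed.

Section Rescale.
Variables (p : nat) (p_pr : prime p) (n : nat) (I J : {set 'I_n}).

Definition shrink_rows : 'M[rat]_n :=
  diag_mx (\row_i (if i \in I then p%:R^-1 else 1)).
Definition stretch_cols : 'M[rat]_n :=
  diag_mx (\row_j (if j \in J then 1 else p%:R)).

Let p_neq0 : (p%:R : rat) != 0. Proof. by rewrite pnatr_eq0 -lt0n prime_gt0. Qed.

Lemma det_shrink_stretch : (#|I| + #|J| = n.+1)%N ->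
  \det shrink_rows * \det stretch_cols = p%:R^-1.
Proof.
move=> cardIJ; rewrite !det_diag.
under eq_bigr => i _ do rewrite mxE.
under [X in _ * X]eq_bigr => j _ do rewrite mxE -if_neg.
rewrite -!big_mkcond !prodr_const.
have : #|I| = #|[predC J]|.+1 by move: (cardC J); rewrite card_ord; lia.
by move=> ->; rewrite exprS exprVn -mulrA mulVf ?expf_neq0 // mulr1.
Qed.

Lemma shrink_stretch_integral (B : 'M[int]_n) :
  (forall i j, i \in I -> j \in J -> (p %| B i j)%Z) ->
  mx_integral (shrink_rows *m ratmx B *m stretch_cols).
Proof.
move=> dvdB i j; rewrite mul_mx_diag mul_diag_mx !mxE.
case: ifP => iI; case: ifP => jJ; rewrite ?mulr1 ?mul1r.
- have /dvdzP [k ->] := dvdB i j iI jJ.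
  by rewrite intrM mulrCA mulVf // mulr1 intr_int.
- by rewrite mulrAC mulVf // mul1r intr_int.
- exact: intr_int.
- by rewrite rpredM ?intr_int ?natr_int.
Qed.

End Rescale.

Section ModPrime.
Variables (p : nat) (p_pr : prime p).
Local Notation red A := (map_mx (intr : int -> 'F_p) A).

Lemma intr_Fp_eq0 (z : int) : ((z%:~R : 'F_p) == 0) = (p %| z)%Z.
Proof.
case: z => n; last rewrite NegzE rmorphN /= oppr_eq0.
all: by rewrite -[_ == 0](inj_eq val_inj) /= val_Fp_nat.
Qed.

Lemma unimodular_usub_mod n (P : 'M[int]_(1 + n)) : \det (red P) = 0 ->
  exists2 X : 'M[int]_(1 + n), X \in unitmx & usubmx (red (X *m P)) = 0.
Proof.
(* In a Smith form P = L D S some diagonal entry of D vanishes mod p, and the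
   corresponding row of L^-1 P is then divisible by p. *)
have [L uL [S uS [d _ defP]]] := int_Smith_normal_form P.
set D := \matrix_(i, j) _ in defP.
have unit_Fp (z : int) : z \is a GRing.unit -> (z%:~R : 'F_p) != 0.
  by move=> uz; rewrite -unitfE rmorph_unit.
have redD : red D = diag_mx (\row_i (d`_i)%:~R).
  by apply/matrixP => i j; rewrite !mxE rmorphMn.
rewrite defP !map_mxM !det_mulmx redD det_diag !det_map_mx => /eqP.
have [uL' uS'] : \det L \is a GRing.unit /\ \det S \is a GRing.unit.
  by rewrite -!unitmxE.
rewrite !mulf_eq0 (negbTE (unit_Fp _ uL')) (negbTE (unit_Fp _ uS')) /= orbF.
case/prodf_eq0 => i0 _; rewrite mxE => /eqP di0.
exists (xrow i0 (lshift n 0) (invmx L)).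
  by rewrite xrowE unitmx_mul unitmx_perm unitmx_inv.
have -> : xrow i0 (lshift n 0) (invmx L) *m (L *m D *m S) =
          xrow i0 (lshift n 0) (D *m S).
  by rewrite !xrowE -!mulmxA mulKmx.
rewrite map_xrow map_mxM redD; apply/matrixP => i j; rewrite (ord1 i) !mxE perm.tpermR.
by rewrite big1 // => k _; rewrite !mxE di0 mul0rn !mul0r.
Qed.

Lemma unimodular_first_row_mod n (P Q : 'M[int]_(1 + n)) : \det (red P) = 0 ->
  exists X Y : 'M[int]_(1 + n), [/\ X \in unitmx, Y \in unitmx,
    usubmx (red (X *m P *m Y)) = 0 & ursubmx (X *m Q *m Y) = 0].
Proof.
move=> detP; have [X uX XP0] := unimodular_usub_mod detP.
have [Y uY YQ0] := unimodular_row_reduce (usubmx (X *m Q)).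
exists X, Y; split => //; first by rewrite map_mxM -mul_usub_mx XP0 mul0mx.
by rewrite /ursubmx -mul_usub_mx.
Qed.

Lemma det_pencil_mod_zero_block n (P Q : 'M[int]_n) :
  det_pencil (red P) (red Q) = 0 ->
  exists X Y : 'M[int]_n, [/\ X \in unitmx, Y \in unitmx &
    common_zero_block (red (X *m P *m Y)) (red (X *m Q *m Y))].
Proof.
(* After clearing the first row of P and the first row of Q beyond its corner,
   either the whole first row vanishes mod p, or the pencil splits off the
   nonzero factor -Q_00 and the induction proceeds on the lower-right block. *)
elim: n P Q => [|n IHn] P Q singPQ.
  by move: singPQ; rewrite /det_pencil det_mx00 => /eqP; rewrite oner_eq0.
have [X1 [Y1 [uX1 uY1 uP2 urQ2]]] :=
  unimodular_first_row_mod Q (det_pencil_eq0 singPQ).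
set P2 := X1 *m P *m Y1 in uP2 *; set Q2 := X1 *m Q *m Y1 in urQ2 *.
have ulP2 : ulsubmx (red P2) = 0.
  by rewrite /ulsubmx uP2; apply/matrixP => i j; rewrite !mxE.
have urP2 : ursubmx (red P2) = 0.
  by rewrite /ursubmx uP2; apply/matrixP => i j; rewrite !mxE.
have {}urQ2 : ursubmx (red Q2) = 0 by rewrite -map_ursubmx urQ2 map_mx0.
have [ulQ2 | ulQ2] := eqVneq (ulsubmx (red Q2)) 0.
  exists X1, Y1; split => //; apply: common_zero_block_usub => //.
  by rewrite -[usubmx _]hsubmxK -/(ulsubmx _) -/(ursubmx _) ulQ2 urQ2 row_mx0.
have singDR : det_pencil (red (drsubmx P2)) (red (drsubmx Q2)) = 0.
  have : det_pencil (red P2) (red Q2) = 0 by rewrite !map_mxM det_pencilM singPQ mulr0.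
  rewrite (det_pencil_lblock urP2 urQ2) ulP2 det_pencil0_mx11 !map_drsubmx => /eqP.
  rewrite mulf_eq0 oppr_eq0 polyC_eq0 => /orP [/eqP Q2_00 | /eqP //].
  by case/eqP: ulQ2; rewrite [LHS]mx11_scalar Q2_00 raddf0.
have [X' [Y' [uX' uY' zeroDR]]] := IHn _ _ singDR.
exists (lift0_mx X' *m X1), (Y1 *m lift0_mx Y').
split; rewrite ?unitmx_mul ?lift0_mx_unit ?uX1 ?uY1 ?uX' ?uY' //.
have conj M : red (lift0_mx X' *m X1 *m M *m (Y1 *m lift0_mx Y')) =
    lift0_mx (red X') *m red (X1 *m M *m Y1) *m lift0_mx (red Y').
  by rewrite !map_mxM !map_lift0_mx !mulmxA.
rewrite !conj !mul_lift0_mx urP2 urQ2 !mul0mx.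
by apply: (@common_zero_block_lblock _ 1 n); rewrite -!map_drsubmx -!map_mxM.
Qed.

Lemma zero_block_mod_not_coprime n (P Q X Y : 'M[int]_n) :
  X \in unitmx -> Y \in unitmx ->
  common_zero_block (red (X *m P *m Y)) (red (X *m Q *m Y)) ->
  ~ mx_coprime (ratmx P) (ratmx Q).
Proof.
move=> uX uY [I [J [cardIJ zeroIJ]]]; apply.
pose R := shrink_rows p I *m ratmx X; pose S := ratmx Y *m stretch_cols p J.
have detRS : `|\det R * \det S| = p%:R^-1.
  rewrite !det_mulmx !normrM !det_ratmx_unimodular // mulr1 mul1r -normrM.
  by rewrite det_shrink_stretch // normfV normr_nat.
have /andP [detR detS] : (\det R != 0) && (\det S != 0).
  rewrite -negb_or -mulf_eq0 -normr_eq0 detRS invr_eq0 pnatr_eq0.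
  by rewrite -lt0n prime_gt0.
have red_eq0_dvd (B : 'M[int]_n) i j : red B i j = 0 -> (p %| B i j)%Z.
  by rewrite mxE => /eqP; rewrite intr_Fp_eq0.
have RBS B : R *m ratmx B *m S =
    shrink_rows p I *m ratmx (X *m B *m Y) *m stretch_cols p J.
  by rewrite /ratmx !map_mxM !mulmxA.
exists R, S; split; rewrite ?unitmxE ?unitfE ?RBS //.
- rewrite detRS invr_gt0 ltr0n prime_gt0 //=.
  by rewrite invf_lt1 ?ltr0n ?prime_gt0 // ltr1n prime_gt1.
- apply: shrink_stretch_integral => // i j iI jJ.
  by apply: red_eq0_dvd; case: (zeroIJ i j iI jJ).
- apply: shrink_stretch_integral => // i j iI jJ.
  by apply: red_eq0_dvd; case: (zeroIJ i j iI jJ).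
Qed.

Lemma pencil_mod_prime_not_coprime n (P Q : 'M[int]_n) :
  (forall i, (p %| (det_pencil P Q)`_i)%Z) -> ~ mx_coprime (ratmx P) (ratmx Q).
Proof.
move=> dvdF; have singPQ : det_pencil (red P) (red Q) = 0.
  rewrite -map_det_pencil; apply/polyP => i.
  by rewrite coef_map coef0; apply/eqP; rewrite intr_Fp_eq0.
have [X [Y [uX uY zeroXY]]] := det_pencil_mod_zero_block singPQ.
exact: zero_block_mod_not_coprime zeroXY.
Qed.

End ModPrime.

Lemma map_intr_polyOver_int (F : {poly int}) :
  map_poly (intr : int -> rat) F \is a polyOver Num.int.
Proof. by apply/polyOverP => i; rewrite coef_map intr_int. Qed.

Lemma scale_polyOver_int_absz (z : int) (q : {poly rat}) :
  z%:~R *: q \is a polyOver Num.int -> (absz z)%:R *: q \is a polyOver Num.int.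
Proof.
move=> zq; rewrite -[(absz z)%:R]/((absz z)%:Z%:~R : rat) abszEsign.
rewrite rmorphM rmorphXn rmorphN1 -scalerA.
by apply: polyOverZ => //; rewrite rpredX ?rpredN ?rpred1.
Qed.

Lemma scale_polyOver_int_gcdz (a b : int) (q : {poly rat}) :
  a%:~R *: q \is a polyOver Num.int -> b%:~R *: q \is a polyOver Num.int ->
  (gcdz a b)%:~R *: q \is a polyOver Num.int.
Proof.
move=> aq bq; have [u [v <-]] := Bezoutz a b.
rewrite rmorphD !rmorphM /= scalerDl -!scalerA.
apply/polyOverP => i; rewrite coefD !coefZ.
by rewrite rpredD // rpredM ?intr_int // -coefZ; apply: polyOverP.
Qed.

Lemma monic_scale_polyOver_int (a : rat) (q : {poly rat}) :
  q \is monic -> a *: q \is a polyOver Num.int -> a \is a Num.int.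
Proof.
move=> /monicP lead1 /polyOverP /(_ (size q).-1).
by rewrite coefZ -/(lead_coef q) lead1 mulr1.
Qed.

Lemma dvdz_coef_of_clearing (F : {poly int}) (D : int) (q : {poly rat}) (m g : nat) :
  map_poly intr F = D%:~R *: q -> absz D = (m * g)%N ->
  g%:R *: q \is a polyOver Num.int -> forall i, (m %| F`_i)%Z.
Proof.
move=> defF defD gq i.
have /floorK gqi := polyOverP gq i; set k := Num.floor _ in gqi.
suff -> : F`_i = (Num.sg D * k) * m%:Z by rewrite dvdz_mull.
apply: (@intr_inj rat); rewrite -coef_map defF coefZ.
rewrite coefZ in gqi.
rewrite {1}(_ : D = Num.sg D * (m * g)%N%:Z); last by rewrite -defD abszE -numEsg.
rewrite !intrM -[((m * g)%N%:Z)%:~R]/((m * g)%:R : rat) natrM gqi.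
by rewrite -!mulrA; congr (_ * _); rewrite mulrCA [q`_i * _]mulrC.
Qed.

Lemma int_clearing_prime_divisor (F : {poly int}) (D : int) (q : {poly rat}) (c : nat) :
  map_poly intr F = D%:~R *: q -> (0 < c)%N -> (c < absz D)%N ->
  c%:R *: q \is a polyOver Num.int ->
  exists2 l, prime l & forall i, (l %| F`_i)%Z.
Proof.
move=> defF c_gt0 ltcD cq; pose g := gcdn c (absz D).
have gq : g%:R *: q \is a polyOver Num.int.
  have Dq : D%:~R *: q \is a polyOver Num.int by rewrite -defF map_intr_polyOver_int.
  exact: (scale_polyOver_int_gcdz (a := c) cq Dq).
have g_gt0 : (0 < g)%N by rewrite gcdn_gt0 c_gt0.
pose m := (absz D %/ g)%N.
have defD : absz D = (m * g)%N by rewrite divnK // dvdn_gcdr.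
have m_gt1 : (1 < m)%N.
  have : (g <= c)%N by rewrite dvdn_leq // dvdn_gcdl.
  by move: ltcD; rewrite defD; nia.
exists (pdiv m) => [|i]; first exact: pdiv_prime.
apply: dvdz_trans (dvdz_coef_of_clearing defF defD gq i).
by rewrite dvdzE /= pdiv_dvd.
Qed.

Lemma integral_ratmx n (A : 'M[rat]_n) :
  mx_integral A -> exists B : 'M[int]_n, A = ratmx B.
Proof.
move=> intA; exists (map_mx (@Num.floor _) A).
by apply/matrixP => i j; rewrite !mxE floorK.
Qed.

Lemma ratmx_det_pencil n (P Q : 'M[int]_n) : \det P != 0 ->
  map_poly intr (det_pencil P Q) =
  (\det P)%:~R *: char_poly (invmx (ratmx P) *m ratmx Q).
Proof.
move=> detP; have uP : ratmx P \in unitmx.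
  by rewrite unitmxE /ratmx det_map_mx unitfE intr_eq0.
by rewrite map_det_pencil (det_pencil_char_poly _ uP) /ratmx det_map_mx mul_polyC.
Qed.

Lemma small_int_clearing_of_scaling n (P Q : 'M[int]_n) (R S : 'M[rat]_n) :
  \det P != 0 -> 0 < `|\det R * \det S| < 1 ->
  mx_integral (R *m ratmx P *m S) -> mx_integral (R *m ratmx Q *m S) ->
  exists2 c, (0 < c < absz (\det P))%N &
    c%:R *: char_poly (invmx (ratmx P) *m ratmx Q) \is a polyOver Num.int.
Proof.
move=> detP /andP [t_gt0 t_lt1] intP intQ.
set t := \det R * \det S in t_gt0 t_lt1; set q := char_poly _.
have [P' defP'] := integral_ratmx intP; have [Q' defQ'] := integral_ratmx intQ.
have defF : map_poly intr (det_pencil P' Q') = (t * (\det P)%:~R) *: q.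
  rewrite map_det_pencil -[map_mx _ P']/(ratmx P') -[map_mx _ Q']/(ratmx Q').
  rewrite -defP' -defQ' det_pencilM -map_det_pencil ratmx_det_pencil //.
  by rewrite mul_polyC scalerA.
have /floorK tD : t * (\det P)%:~R \is a Num.int.
  apply: (@monic_scale_polyOver_int _ q (char_poly_monic _)).
  by rewrite -defF map_intr_polyOver_int.
set z := Num.floor _ in tD.
have normz : (absz z)%:R = `|t| * (absz (\det P))%:R :> rat.
  by rewrite !natr_absz !intr_norm tD normrM.
exists (absz z).
  rewrite -!(ltr_nat rat) normz pmulr_rgt0 ?ltr0n ?absz_gt0 //=.
  by rewrite detP /= gtr_pMl ?ltr0n ?absz_gt0.
apply: (scale_polyOver_int_absz (z := z) (q := q)).
by rewrite tD -defF map_intr_polyOver_int.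
Qed.

Unset Implicit Arguments. Set Strict Implicit.
Theorem theorem5p4 (d : nat) (P Q : 'M[int]_d) :
  \det P != 0 ->
  mx_irreducible (ratmx P) (ratmx Q) ->
  mx_coprime (ratmx P) (ratmx Q) <->
  least_int_clearing (absz (\det P))
    (char_poly (invmx (ratmx P) *m ratmx Q)).
Proof.
move=> detP _; have defF := ratmx_det_pencil Q detP.
split => [coprimePQ | [_ _ leastD] [R [S [_ _ detRS intP intQ]]]].
  split=> [||c c_gt0 clear_c]; first by rewrite absz_gt0.
    by apply: scale_polyOver_int_absz; rewrite -defF map_intr_polyOver_int.
  rewrite leqNgt; apply/negP => ltcD.
  have [l l_pr dvdF] := int_clearing_prime_divisor defF c_gt0 ltcD clear_c.
  exact: (pencil_mod_prime_not_coprime l_pr dvdF coprimePQ).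
have [c /andP [c_gt0 ltcD] clear_c] :=
  small_int_clearing_of_scaling detP detRS intP intQ.
by have := leastD c c_gt0 clear_c; rewrite leqNgt ltcD.
Qed.
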